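(* Suppose $c_1\ge-1$, $c_2\ge-1$, $c_3>\bar c_3(c_1,c_2)$. Then any $C^1$ solution $U$ of $(1-x^2)U'+2xU+\frac12U^2=P_c(x)$ in $(-1,1)$ other than $U^+$ and $U^-$ satisfies $U^-<U<U^+$ in $(-1,1)$, $U(-1)=\tau_1(c_1)$ and $U(1)=\tau_2'(c_2)$.
   Context: $P_c(x):=c_1(1-x)+c_2(1+x)+c_3(1-x^2)$; $\bar c_3(c_1,c_2):=-\frac12(\sqrt{1+c_1}+\sqrt{1+c_2})(\sqrt{1+c_1}+\sqrt{1+c_2}+2)$; $\tau_1(c_1):=2-2\sqrt{1+c_1}$, $\tau_2(c_1):=2+2\sqrt{1+c_1}$, $\tau_1'(c_2):=-2-2\sqrt{1+c_2}$, $\tau_2'(c_2):=-2+2\sqrt{1+c_2}$. $U^+$ denotes the solution on $(-1,1)$ which near $x=-1$ is given by a convergent power series $\tau_2(c_1)+\sum_{n\ge1}a_n(1+x)^n$, and $U^-$ the solution on $(-1,1)$ which near $x=1$ is given by a convergent power series $\tau_1'(c_2)+\sum_{n\ge1}b_n(1-x)^n$ (both exist on all of $(-1,1)$ under the hypotheses). $U(\pm1)$ denote one-sided limits. *)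

From Stdlib Require Import Reals Lra.
From Coquelicot Require Import Coquelicot.
Open Scope R_scope.

Definition Pc (c1 c2 c3 x : R) : R :=
  c1 * (1 - x) + c2 * (1 + x) + c3 * (1 - x ^ 2).

Definition c3bar (c1 c2 : R) : R :=
  - / 2 * (sqrt (1 + c1) + sqrt (1 + c2)) * (sqrt (1 + c1) + sqrt (1 + c2) + 2).

Definition tau1 (c1 : R) : R := 2 - 2 * sqrt (1 + c1).
Definition tau2 (c1 : R) : R := 2 + 2 * sqrt (1 + c1).
Definition tau1' (c2 : R) : R := -2 - 2 * sqrt (1 + c2).
Definition tau2' (c2 : R) : R := -2 + 2 * sqrt (1 + c2).

Definition is_C1_sol (c1 c2 c3 : R) (U : R -> R) : Prop :=
  forall x, -1 < x < 1 ->
    ex_derive U x /\ continuous (Derive U) x /\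
    (1 - x ^ 2) * Derive U x + 2 * x * U x + / 2 * (U x) ^ 2 = Pc c1 c2 c3 x.

Definition is_Uplus (c1 c2 c3 : R) (U : R -> R) : Prop :=
  is_C1_sol c1 c2 c3 U /\
  exists (d : R) (a : nat -> R), 0 < d /\ a O = tau2 c1 /\
    forall x, -1 < x < -1 + d -> is_pseries a (1 + x) (U x).

Definition is_Uminus (c1 c2 c3 : R) (U : R -> R) : Prop :=
  is_C1_sol c1 c2 c3 U /\
  exists (d : R) (b : nat -> R), 0 < d /\ b O = tau1' c2 /\
    forall x, 1 - d < x < 1 -> is_pseries b (1 - x) (U x).

(** Write the equation as [U' = F(x, U)] with
    [F(x, u) = (P_c(x) - 2 x u - u^2 / 2) / (1 - x^2)].  The difference of two solutions
    satisfies a linear equation with locally bounded coefficient, so by Gronwall two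
    solutions that meet coincide, and distinct solutions are strictly ordered.

    Near [x = -1], [(1 - x^2) F(x, u) = -(u - tau1)(u - tau2) / 2 + O(1 + x)]: the factor
    [1 / (1 + x)] makes the flow, followed backwards to [-1], leave [tau2] and fall onto
    [tau1] at a non-integrable rate.  If [U > U^+ = tau2 + O(1 + x)], then
    [e^(B x) / (U - U^+)] is bounded above by [C + k ln (1 + x)] and so becomes negative.
    If [U < U^+], then [U] first separates from [U^+] by a fixed amount, after which it is
    trapped in [(tau1 - eps, tau1 + eps)] near [-1].

    The endpoint [x = 1] follows from the symmetry [x -> -x, U -> -U(-x)], which exchanges
    [c1] and [c2] and turns [U^-] into a solution of the same kind as [U^+]. *)

From Stdlib Require Import Reals Lra Classical.
From Coquelicot Require Import Coquelicot.
Open Scope R_scope.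

Lemma is_derive_continuity_pt (f : R -> R) x l : is_derive f x l -> continuity_pt f x.
Proof.
  intros H. apply continuity_pt_filterlim. apply (ex_derive_continuous f). now exists l.
Qed.

Lemma continuity_pt_ball (f : R -> R) z eps : continuity_pt f z -> 0 < eps ->
  exists d, 0 < d /\ forall w, Rabs (w - z) < d -> Rabs (f w - f z) < eps.
Proof.
  intros H Heps. apply continuity_pt_filterlim in H.
  destruct (proj1 (filterlim_locally f (f z)) H (mkposreal eps Heps)) as [d Hd].
  exists d. split; [apply cond_pos | intros w Hw; apply (Hd w), Hw].
Qed.

Lemma continuity_bounded (f : R -> R) a b : a <= b ->
  (forall x, a <= x <= b -> continuity_pt f x) ->
  exists K, forall x, a <= x <= b -> Rabs (f x) <= K.
Proof.
  intros Hab Hc.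
  destruct (continuity_ab_maj (fun x => Rabs (f x)) a b Hab) as [xM [HM _]].
  - intros x Hx. apply (continuity_pt_comp f Rabs), Rcontinuity_abs. auto.
  - exists (Rabs (f xM)). exact HM.
Qed.

Lemma derive_nonneg_le (f df : R -> R) a b : a <= b ->
  (forall x, a <= x <= b -> is_derive f x (df x)) ->
  (forall x, a <= x <= b -> 0 <= df x) -> f a <= f b.
Proof.
  intros Hab Hd Hpos.
  destruct (Req_dec a b) as [<- | Hne]; [lra |].
  assert (Hmin : Rmin a b = a) by (apply Rmin_left; lra).
  assert (Hmax : Rmax a b = b) by (apply Rmax_right; lra).
  destruct (MVT_gen f a b df) as [c [Hc Heq]]; rewrite ?Hmin, ?Hmax in *.
  - intros x Hx. apply Hd. lra.
  - intros x Hx. apply (is_derive_continuity_pt f x (df x)), Hd. lra.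
  - assert (0 <= df c) by (apply Hpos; lra). nra.
Qed.

Lemma derive_neg_right_lt (f : R -> R) z l : is_derive f z l -> l < 0 ->
  exists e, 0 < e /\ forall w, z < w < z + e -> f w < f z.
Proof.
  intros H Hl. apply is_derive_Reals in H.
  destruct (H (- l / 2)) as [d Hd]; [lra |].
  exists d. split; [apply cond_pos |]. intros w Hw.
  specialize (Hd (w - z) ltac:(lra) ltac:(rewrite Rabs_right; lra)).
  replace (z + (w - z)) with w in Hd by ring.
  assert (Hq : f w - f z = (f w - f z) / (w - z) * (w - z)) by (field; lra).
  apply Rabs_def2 in Hd. nra.
Qed.

Lemma last_crossing (f : R -> R) y b L : y <= b ->
  (forall x, y <= x <= b -> continuity_pt f x) -> f y <= L -> L < f b ->
  exists z, y <= z < b /\ f z = L /\ forall w, z < w <= b -> L < f w.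
Proof.
  intros Hyb Hc Hy Hb.
  set (E := fun w => y <= w <= b /\ f w <= L).
  destruct (completeness E) as [z [Hub Hlub]].
  { exists b. intros w [Hw _]. lra. }
  { exists y. split; [lra | exact Hy]. }
  assert (Hyz : y <= z) by (apply Hub; split; [lra | exact Hy]).
  assert (Hzb : z <= b) by (apply Hlub; intros w [Hw _]; lra).
  assert (Hcz : continuity_pt f z) by (apply Hc; lra).
  assert (Hright : forall w, z < w <= b -> L < f w).
  { intros w Hw. apply Rnot_le_lt. intros Hfw.
    assert (w <= z) by (apply Hub; split; [lra | exact Hfw]). lra. }
  assert (Hle : f z <= L).
  { apply Rnot_lt_le. intros Hz.
    destruct (continuity_pt_ball f z (f z - L) Hcz) as [d [Hd Hball]]; [lra |].
    enough (z <= z - d) by lra.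
    apply Hlub. intros w [Hw Hfw]. apply Rnot_lt_le. intros Hwz.
    assert (w <= z) by (apply Hub; split; assumption).
    assert (Hfwz : Rabs (f w - f z) < f z - L) by (apply Hball; rewrite Rabs_left1; lra).
    apply Rabs_def2 in Hfwz. lra. }
  assert (Hzb' : z < b) by (destruct (Req_dec z b) as [-> |]; lra).
  assert (Hge : L <= f z).
  { apply Rnot_lt_le. intros Hz.
    destruct (continuity_pt_ball f z (L - f z) Hcz) as [d [Hd Hball]]; [lra |].
    set (w := Rmin (z + d / 2) b).
    assert (Hw : z < w <= b) by (unfold w; apply Rmin_case_strong; lra).
    assert (Hfwz : Rabs (f w - f z) < L - f z).
    { apply Hball. unfold w. apply Rmin_case_strong; intros; rewrite Rabs_right; lra. }
    apply Rabs_def2 in Hfwz. specialize (Hright w Hw). lra. }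
  exists z. repeat split; auto; lra.
Qed.

Lemma barrier_above (f df : R -> R) a b L : a < b ->
  (forall y, a < y <= b -> is_derive f y (df y)) -> L < f b ->
  (forall y, a < y <= b -> f y = L -> df y < 0) ->
  forall y, a < y <= b -> L < f y.
Proof.
  intros Hab Hd Hb Hcross y Hy. apply Rnot_le_lt. intros Hfy.
  destruct (last_crossing f y b L) as [z [Hz [Hfz Hright]]]; try lra.
  { intros x Hx. apply (is_derive_continuity_pt f x (df x)), Hd. lra. }
  destruct (derive_neg_right_lt f z (df z)) as [e [He Hdec]].
  { apply Hd. lra. }
  { apply Hcross; [lra | exact Hfz]. }
  set (w := Rmin (z + e / 2) b).
  assert (Hw : z < w <= b) by (unfold w; apply Rmin_case_strong; lra).
  assert (f w < f z) by (apply Hdec; unfold w; apply Rmin_case_strong; lra).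
  specialize (Hright w Hw). lra.
Qed.

Lemma barrier_below (f df : R -> R) a b L : a < b ->
  (forall y, a < y <= b -> is_derive f y (df y)) -> f b < L ->
  (forall y, a < y <= b -> f y = L -> 0 < df y) ->
  forall y, a < y <= b -> f y < L.
Proof.
  intros Hab Hd Hb Hcross y Hy.
  enough (- L < - f y) by lra.
  apply (barrier_above (fun t => - f t) (fun t => - df t) a b); [exact Hab | | lra | | exact Hy].
  - intros t Ht. apply (is_derive_opp f), Hd, Ht.
  - intros t Ht Heq. assert (0 < df t) by (apply Hcross; [exact Ht | lra]). lra.
Qed.

Lemma derive_ge_pole_unbounded_below (f df : R -> R) a b c : a < b -> 0 < c ->
  (forall y, a < y <= b -> is_derive f y (df y)) ->
  (forall y, a < y <= b -> c <= (y - a) * df y) ->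
  forall M, exists y, a < y < b /\ f y < M.
Proof.
  intros Hab Hc Hd Hle M.
  set (G := fun y => f y - c * ln (y - a)).
  assert (HG : forall y, a < y <= b -> G y <= G b).
  { intros y Hy. apply (derive_nonneg_le G (fun t => df t - c / (t - a))); [lra | |].
    - intros t Ht. apply (is_derive_minus f (fun t => c * ln (t - a))).
      + apply Hd. lra.
      + auto_derive; [lra | field; lra].
    - intros t Ht. specialize (Hle t ltac:(lra)).
      enough (c / (t - a) <= df t) by lra.
      apply (Rmult_le_reg_l (t - a)); [lra |].
      replace ((t - a) * (c / (t - a))) with c by (field; lra). exact Hle. }
  set (X := (M - 1 - G b) / c).
  set (t := Rmin ((b - a) / 2) (exp X)).
  assert (Ht : 0 < t) by (apply Rmin_pos; [lra | apply exp_pos]).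
  assert (Htb : t <= (b - a) / 2) by apply Rmin_l.
  assert (Hlnt : c * ln t <= M - 1 - G b).
  { replace (M - 1 - G b) with (c * X) by (unfold X; field; lra).
    apply Rmult_le_compat_l; [lra |].
    rewrite <- (ln_exp X). apply ln_le; [exact Ht | apply Rmin_r]. }
  exists (a + t). split; [lra |].
  specialize (HG (a + t) ltac:(lra)).
  change (f (a + t) - c * ln (a + t - a) <= G b) in HG.
  replace (a + t - a) with t in HG by ring. lra.
Qed.

Lemma derive_le_pole_unbounded_above (f df : R -> R) a b c : a < b -> 0 < c ->
  (forall y, a < y <= b -> is_derive f y (df y)) ->
  (forall y, a < y <= b -> (y - a) * df y <= - c) ->
  forall M, exists y, a < y < b /\ M < f y.
Proof.
  intros Hab Hc Hd Hle M.
  destruct (derive_ge_pole_unbounded_below (fun t => - f t) (fun t => - df t) a b c Hab Hc)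
    with (M := - M) as [y [Hy Hfy]].
  - intros y Hy. apply (is_derive_opp f), Hd, Hy.
  - intros y Hy. specialize (Hle y Hy). lra.
  - exists y. split; [exact Hy | lra].
Qed.

Lemma log_derive_le_pole_unbounded_above (D dD : R -> R) a b c : a < b -> 0 < c ->
  (forall y, a < y <= b -> is_derive D y (dD y)) ->
  (forall y, a < y <= b -> 0 < D y) ->
  (forall y, a < y <= b -> (y - a) * dD y <= - c * D y) ->
  forall M, exists y, a < y < b /\ M < D y.
Proof.
  intros Hab Hc Hd Hpos Hle M.
  destruct (derive_le_pole_unbounded_above (fun t => ln (D t)) (fun t => dD t / D t) a b c Hab Hc)
    with (M := ln (Rmax M 1)) as [y [Hy Hln]].
  - intros y Hy. apply (is_derive_comp ln D y (/ D y) (dD y)); [| apply Hd, Hy].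
    apply is_derive_Reals, derivable_pt_lim_ln, Hpos, Hy.
  - intros y Hy. specialize (Hpos y Hy). specialize (Hle y Hy).
    apply (Rmult_le_reg_r (D y)); [exact Hpos |].
    replace ((y - a) * (dD y / D y) * D y) with ((y - a) * dD y) by (field; lra). exact Hle.
  - exists y. split; [exact Hy |].
    apply ln_lt_inv in Hln; [| apply Rlt_le_trans with 1; [lra | apply Rmax_r] | apply Hpos; lra].
    pose proof (Rmax_l M 1). lra.
Qed.

Lemma riccati_subsolution_not_positive (D dD : R -> R) a b B k : a < b -> 0 <= B -> 0 < k ->
  (forall y, a < y <= b -> is_derive D y (dD y)) ->
  (forall y, a < y <= b -> 0 < D y) ->
  (forall y, a < y <= b -> (y - a) * dD y <= (y - a) * B * D y - k * D y ^ 2) -> False.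
Proof.
  intros Hab HB Hk Hd Hpos Hric.
  destruct (derive_ge_pole_unbounded_below (fun y => exp (B * y) / D y)
    (fun y => exp (B * y) * (B * D y - dD y) / D y ^ 2) a b (k * exp (B * a)))
    with (M := 0) as [y [Hy HPhi]]; [exact Hab | | | |].
  - apply Rmult_lt_0_compat; [exact Hk | apply exp_pos].
  - intros y Hy. specialize (Hpos y Hy).
    auto_derive; [split; [now exists (dD y); apply Hd | lra] |].
    replace (Derive (fun t => D t) y) with (dD y) by (symmetry; apply is_derive_unique, Hd, Hy).
    field. lra.
  - intros y Hy. specialize (Hpos y Hy). specialize (Hric y Hy).
    assert (Hexp : exp (B * a) <= exp (B * y)).
    { destruct (Rle_lt_or_eq_dec (B * a) (B * y)) as [Hlt | ->];
        [nra | now apply Rlt_le, exp_increasing | lra]. }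
    pose proof (exp_pos (B * a)).
    apply (Rmult_le_reg_r (D y ^ 2)); [nra |].
    replace ((y - a) * (exp (B * y) * (B * D y - dD y) / D y ^ 2) * D y ^ 2)
      with (exp (B * y) * ((y - a) * B * D y - (y - a) * dD y)) by (field; lra).
    replace (k * exp (B * a) * D y ^ 2) with (exp (B * a) * (k * D y ^ 2)) by ring.
    apply Rle_trans with (exp (B * y) * (k * D y ^ 2)).
    { apply Rmult_le_compat_r; [apply Rmult_le_pos; [lra | apply pow2_ge_0] | exact Hexp]. }
    apply Rmult_le_compat_l; [apply Rlt_le, exp_pos | lra].
  - pose proof (exp_pos (B * y)). specialize (Hpos y ltac:(lra)).
    assert (0 < exp (B * y) / D y) by (apply Rdiv_lt_0_compat; lra). lra.
Qed.

Lemma at_right_of_interval (P : R -> Prop) a b : a < b ->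
  (forall y, a < y <= b -> P y) -> at_right a P.
Proof.
  intros Hab HP. exists (mkposreal (b - a) ltac:(lra)). intros y Hy Hay.
  change (Rabs (y - a) < b - a) in Hy. apply Rabs_def2 in Hy. apply HP. lra.
Qed.

Lemma at_right_interval (P : R -> Prop) a c : a < c -> at_right a P ->
  exists b, a < b < c /\ forall y, a < y <= b -> P y.
Proof.
  intros Hac [eps Heps]. pose proof (cond_pos eps).
  exists (Rmin (a + eps / 2) ((a + c) / 2)). split.
  - apply Rmin_case_strong; lra.
  - intros y Hy. apply Heps; [| lra]. change (Rabs (y - a) < eps).
    pose proof (Rmin_l (a + eps / 2) ((a + c) / 2)). rewrite Rabs_right; lra.
Qed.

Lemma eventually_lt_of_derive_ge_pole (f df : R -> R) a b c L : a < b -> 0 < c ->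
  (forall y, a < y <= b -> is_derive f y (df y)) ->
  (forall y, a < y <= b -> L <= f y -> c <= (y - a) * df y) ->
  at_right a (fun y => f y < L).
Proof.
  intros Hab Hc Hd Hcross.
  destruct (classic (exists x, a < x <= b /\ f x < L)) as [[x [Hx Hfx]] | Hnone].
  - apply (at_right_of_interval _ a x); [lra |].
    apply (barrier_below f df a x L); [lra | intros y Hy; apply Hd; lra | exact Hfx |].
    intros y Hy Hfy.
    assert (c <= (y - a) * df y) by (apply Hcross; lra). nra.
  - assert (Habove : forall y, a < y <= b -> L <= f y).
    { intros y Hy. apply Rnot_lt_le. intros Hfy. apply Hnone. now exists y. }
    destruct (derive_ge_pole_unbounded_below f df a b c Hab Hc Hd) with (M := L)
      as [y [Hy Hfy]].
    + intros y Hy. apply Hcross, Habove; exact Hy.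
    + specialize (Habove y ltac:(lra)). lra.
Qed.

Lemma eventually_gt_of_derive_le_pole (f df : R -> R) a b c L : a < b -> 0 < c ->
  (forall y, a < y <= b -> is_derive f y (df y)) ->
  (forall y, a < y <= b -> f y <= L -> (y - a) * df y <= - c) ->
  at_right a (fun y => L < f y).
Proof.
  intros Hab Hc Hd Hcross.
  apply filter_imp with (fun y => - f y < - L); [intros y Hy; lra |].
  apply (eventually_lt_of_derive_ge_pole _ (fun y => - df y) a b c); [exact Hab | exact Hc | |].
  - intros y Hy. apply (is_derive_opp f), Hd, Hy.
  - intros y Hy Hfy. assert ((y - a) * df y <= - c) by (apply Hcross; [exact Hy | lra]). lra.
Qed.

Lemma gronwall_zero (D dD : R -> R) a b M : a <= b ->
  (forall x, a <= x <= b -> is_derive D x (dD x)) ->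
  (forall x, a <= x <= b -> Rabs (dD x) <= M * Rabs (D x)) ->
  D a = 0 -> D b = 0.
Proof.
  intros Hab Hd Hbound Ha.
  assert (Hdecay : - (D a * D a * exp (- (2 * M) * a)) <= - (D b * D b * exp (- (2 * M) * b))).
  { apply (derive_nonneg_le (fun x => - (D x * D x * exp (- (2 * M) * x)))
      (fun x => - ((2 * D x * dD x - 2 * M * D x ^ 2) * exp (- (2 * M) * x)))); [exact Hab | |].
    - intros x Hx. auto_derive; [repeat split; now exists (dD x); apply Hd |].
      replace (Derive (fun t => D t) x) with (dD x) by (symmetry; apply is_derive_unique, Hd, Hx).
      ring.
    - intros x Hx. specialize (Hbound x Hx).
      assert (Hprod : D x * dD x <= Rabs (D x) * Rabs (dD x))
        by (rewrite <- Rabs_mult; apply Rle_abs).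
      assert (Hgrowth : D x * dD x <= M * D x ^ 2).
      { rewrite <- pow2_abs. pose proof (Rabs_pos (D x)). nra. }
      pose proof (exp_pos (- (2 * M) * x)). nra. }
  rewrite Ha in Hdecay. pose proof (exp_pos (- (2 * M) * b)).
  assert (Hsq : D b * D b = 0) by (apply Rle_antisym; nra).
  now destruct (Rmult_integral _ _ Hsq).
Qed.

Lemma continuous_nonvanishing_pos (f : R -> R) a b x0 :
  (forall x, a < x < b -> continuity_pt f x) -> (forall x, a < x < b -> f x <> 0) ->
  a < x0 < b -> 0 < f x0 -> forall x, a < x < b -> 0 < f x.
Proof.
  intros Hc Hnz Hx0 Hpos x Hx. apply Rnot_le_lt. intros Hle.
  assert (Hneg : f x < 0) by (destruct Hle as [| Heq]; [auto | now elim (Hnz x Hx)]).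
  destruct (Rlt_or_le x x0) as [Hlt | Hge].
  - destruct (Ranalysis5.IVT_interv f x x0) as [z [Hz Hfz]]; auto.
    + intros t Ht. apply Hc. lra.
    + apply (Hnz z); [lra | exact Hfz].
  - destruct (Ranalysis5.IVT_interv (fun t => - f t) x0 x) as [z [Hz Hfz]]; try lra.
    + intros t Ht. apply (continuity_pt_opp f), Hc. lra.
    + destruct Hge as [| ->]; lra.
    + apply (Hnz z); [lra | lra].
Qed.

(* All that is used of the power-series expansions of U^+ and U^-. *)
Definition approaches_linearly_at_minus1 (V : R -> R) (t : R) : Prop :=
  exists d B, 0 < d /\ 0 <= B /\
    forall x, -1 < x < -1 + d -> Rabs (V x - t) <= B * (1 + x).

Lemma pseries_approaches_linearly_at_minus1 (a : nat -> R) (V : R -> R) d : 0 < d ->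
  (forall x, -1 < x < -1 + d -> is_pseries a (1 + x) (V x)) ->
  approaches_linearly_at_minus1 V (a O).
Proof.
  intros Hd Hser.
  set (y0 := d / 2).
  assert (Hy0 : is_pseries a y0 (V (-1 + y0))).
  { replace y0 with (1 + (-1 + y0)) at 1 by ring. apply Hser. unfold y0. lra. }
  (* Convergence at [y0] bounds the terms, so the radius of convergence is at least [y0]. *)
  assert (Hterms : exists M, forall n, Rabs (a n * y0 ^ n) <= M).
  { apply is_pseries_R, (ex_intro _ _), ex_series_lim_0, is_lim_seq_abs, is_lim_seq_Reals
      in Hy0.
    destruct (cauchy_bound _ (CV_Cauchy _ (exist _ _ Hy0))) as [M HM].
    exists M. intros n. apply HM. now exists n. }
  assert (Hrad : Rbar_le y0 (CV_radius a)) by apply (proj1 (CV_radius_bounded a)), Hterms.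
  set (y1 := y0 / 2).
  assert (Hinside : forall y, 0 <= y <= y1 -> Rbar_lt (Rabs y) (CV_radius a)).
  { intros y Hy. apply Rbar_lt_le_trans with y0; [| exact Hrad].
    simpl. rewrite Rabs_right; unfold y1, y0 in *; lra. }
  destruct (continuity_bounded (PSeries (PS_decr_1 a)) 0 y1) as [K HK].
  { unfold y1, y0. lra. }
  { intros y Hy. apply PSeries_continuity. rewrite CV_radius_decr_1. apply Hinside, Hy. }
  exists y1, (Rmax K 0). split; [unfold y1, y0; lra |]. split; [apply Rmax_r |].
  intros x Hx.
  assert (Hx' : 0 <= 1 + x <= y1) by lra.
  rewrite <- (is_pseries_unique a (1 + x) (V x)) by (apply Hser; unfold y1, y0 in *; lra).
  rewrite PSeries_decr_1 by (apply CV_radius_inside, Hinside, Hx').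
  replace (a O + (1 + x) * PSeries (PS_decr_1 a) (1 + x) - a O)
    with ((1 + x) * PSeries (PS_decr_1 a) (1 + x)) by ring.
  rewrite Rabs_mult, Rabs_right, Rmult_comm by lra.
  apply Rmult_le_compat_r; [lra |].
  eapply Rle_trans; [apply HK, Hx' | apply Rmax_l].
Qed.

Lemma approaches_linearly_at_minus1_eventually (V : R -> R) t : approaches_linearly_at_minus1 V t ->
  forall e, 0 < e -> at_right (-1) (fun y => Rabs (V y - t) < e).
Proof.
  intros [d [B [Hd [HB HV]]]] e He.
  set (m := Rmin (d / 2) (e / (B + 1))).
  assert (Hm : 0 < m) by (apply Rmin_pos; [lra | apply Rdiv_lt_0_compat; lra]).
  apply (at_right_of_interval _ (-1) (-1 + m)); [lra |]. intros y Hy.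
  assert (Hmd : m <= d / 2) by apply Rmin_l.
  assert (Hme : m <= e / (B + 1)) by apply Rmin_r.
  assert (HBe : B * (e / (B + 1)) < e).
  { replace (B * (e / (B + 1))) with (e - e / (B + 1)) by (field; lra).
    assert (0 < e / (B + 1)) by (apply Rdiv_lt_0_compat; lra). lra. }
  eapply Rle_lt_trans; [apply HV; lra |].
  apply Rle_lt_trans with (B * (e / (B + 1))); [apply Rmult_le_compat_l; lra | exact HBe].
Qed.

Lemma filterlim_at_right_abs (f : R -> R) a l :
  (forall eps, 0 < eps -> at_right a (fun y => Rabs (f y - l) < eps)) ->
  filterlim f (at_right a) (locally l).
Proof.
  intros H. apply filterlim_locally. intros eps. exact (H eps (cond_pos eps)).
Qed.

Lemma filterlim_reflect (W : R -> R) l : filterlim W (at_right (-1)) (locally l) ->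
  filterlim (fun x => - W (- x)) (at_left 1) (locally (- l)).
Proof.
  intros HW.
  apply (filterlim_comp _ _ _ (fun x => W (- x)) Ropp _ (locally l));
    [| exact (filterlim_opp (K := R_AbsRing) l)].
  apply (filterlim_comp _ _ _ Ropp W _ (at_right (- 1))); [apply filterlim_Ropp_left |].
  replace (- 1) with (-1) by ring. exact HW.
Qed.

(** * The equation and its solutions *)

Definition rhs (c1 c2 c3 x u : R) : R :=
  (Pc c1 c2 c3 x - 2 * x * u - / 2 * u ^ 2) / (1 - x ^ 2).

Definition solves (c1 c2 c3 : R) (U : R -> R) : Prop :=
  forall x, -1 < x < 1 -> is_derive U x (rhs c1 c2 c3 x (U x)).

Lemma is_C1_sol_solves c1 c2 c3 U : is_C1_sol c1 c2 c3 U -> solves c1 c2 c3 U.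
Proof.
  intros H x Hx. destruct (H x Hx) as [Hd [_ Heq]].
  replace (rhs c1 c2 c3 x (U x)) with (Derive U x) by (unfold rhs; rewrite <- Heq; field; nra).
  now apply Derive_correct.
Qed.

Lemma rhs_sub c1 c2 c3 x u v : -1 < x < 1 ->
  (1 - x ^ 2) * (rhs c1 c2 c3 x u - rhs c1 c2 c3 x v) = - (u - v) * (2 * x + (u + v) / 2).
Proof. intros Hx. unfold rhs. field. nra. Qed.

Lemma rhs_near_minus1 c1 c2 c3 x u : -1 <= c1 -> -1 < x < 1 ->
  (1 - x ^ 2) * rhs c1 c2 c3 x u =
  (1 + x) * (c2 - c1 + c3 * (1 - x) - 2 * u) - (u - tau1 c1) * (u - tau2 c1) / 2.
Proof.
  intros Hc Hx. unfold rhs, tau1, tau2, Pc.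
  pose proof (sqrt_sqrt (1 + c1) ltac:(lra)) as Hs.
  set (s := sqrt (1 + c1)) in *. clearbody s.
  replace c1 with (s * s - 1) by lra. field. nra.
Qed.

Lemma solves_reflect c1 c2 c3 U : solves c1 c2 c3 U -> solves c2 c1 c3 (fun x => - U (- x)).
Proof.
  intros HU x Hx. pose proof (HU (- x) ltac:(lra)) as HUx.
  auto_derive; [now exists (rhs c1 c2 c3 (- x) (U (- x))) |].
  replace (Derive (fun t => U t) (- x)) with (rhs c1 c2 c3 (- x) (U (- x)))
    by (symmetry; apply is_derive_unique, HUx).
  unfold rhs, Pc. field. nra.
Qed.

Lemma rhs_lipschitz c1 c2 c3 a b x u v K : -1 < a -> b < 1 -> a <= x <= b ->
  Rabs u <= K -> Rabs v <= K ->
  Rabs (rhs c1 c2 c3 x u - rhs c1 c2 c3 x v) <= (2 + K) / ((1 + a) * (1 - b)) * Rabs (u - v).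
Proof.
  intros Ha Hb Hx Hu Hv.
  assert (Hw : (1 + a) * (1 - b) <= 1 - x ^ 2) by nra.
  assert (Hq : Rabs (2 * x + (u + v) / 2) <= 2 + K).
  { apply Rabs_le_between in Hu, Hv. apply Rabs_le. lra. }
  assert (Hprod : (1 - x ^ 2) * Rabs (rhs c1 c2 c3 x u - rhs c1 c2 c3 x v)
                  = Rabs (u - v) * Rabs (2 * x + (u + v) / 2)).
  { rewrite <- (Rabs_right (1 - x ^ 2)) at 1 by nra.
    rewrite <- Rabs_mult, rhs_sub, Rabs_mult, Rabs_Ropp by lra. reflexivity. }
  apply (Rmult_le_reg_l ((1 + a) * (1 - b))); [nra |].
  replace ((1 + a) * (1 - b) * ((2 + K) / ((1 + a) * (1 - b)) * Rabs (u - v)))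
    with ((2 + K) * Rabs (u - v)) by (field; nra).
  pose proof (Rabs_pos (u - v)). pose proof (Rabs_pos (rhs c1 c2 c3 x u - rhs c1 c2 c3 x v)).
  nra.
Qed.

Lemma solves_agree_forward c1 c2 c3 U V a b : solves c1 c2 c3 U -> solves c1 c2 c3 V ->
  -1 < a -> a <= b -> b < 1 -> U a = V a -> U b = V b.
Proof.
  intros HU HV Ha Hab Hb Heq.
  assert (Hcont : forall W, solves c1 c2 c3 W -> forall x, a <= x <= b -> continuity_pt W x).
  { intros W HW x Hx. apply (is_derive_continuity_pt W x _ (HW x ltac:(lra))). }
  destruct (continuity_bounded U a b Hab (Hcont U HU)) as [KU HKU].
  destruct (continuity_bounded V a b Hab (Hcont V HV)) as [KV HKV].
  enough (U b - V b = 0) by lra.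
  apply (gronwall_zero (fun x => U x - V x)
    (fun x => rhs c1 c2 c3 x (U x) - rhs c1 c2 c3 x (V x)) a b
    ((2 + Rmax KU KV) / ((1 + a) * (1 - b)))); [exact Hab | | | lra].
  - intros x Hx. apply (is_derive_minus U V); [apply HU | apply HV]; lra.
  - intros x Hx. apply rhs_lipschitz; try lra.
    + eapply Rle_trans; [apply HKU, Hx | apply Rmax_l].
    + eapply Rle_trans; [apply HKV, Hx | apply Rmax_r].
Qed.

Lemma solves_agree c1 c2 c3 U V a b : solves c1 c2 c3 U -> solves c1 c2 c3 V ->
  -1 < a < 1 -> -1 < b < 1 -> U a = V a -> U b = V b.
Proof.
  intros HU HV Ha Hb Heq. destruct (Rle_or_lt a b) as [Hab | Hba].
  - apply (solves_agree_forward c1 c2 c3 U V a b); auto; lra.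
  - enough (Hrefl : - U (- - b) = - V (- - b)) by (rewrite Ropp_involutive in Hrefl; lra).
    apply (solves_agree_forward c2 c1 c3 (fun x => - U (- x)) (fun x => - V (- x)) (- a) (- b));
      try apply solves_reflect; try assumption; try lra.
    cbv beta. now rewrite !Ropp_involutive, Heq.
Qed.

Lemma solves_strictly_ordered c1 c2 c3 U V x0 : solves c1 c2 c3 U -> solves c1 c2 c3 V ->
  -1 < x0 < 1 -> U x0 <> V x0 ->
  (forall x, -1 < x < 1 -> U x < V x) \/ (forall x, -1 < x < 1 -> V x < U x).
Proof.
  intros HU HV Hx0 Hne.
  assert (Hpreserved : forall W1 W2, solves c1 c2 c3 W1 -> solves c1 c2 c3 W2 -> W1 x0 < W2 x0 ->
            forall x, -1 < x < 1 -> W1 x < W2 x).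
  { intros W1 W2 HW1 HW2 Hlt x Hx.
    enough (0 < W2 x - W1 x) by lra.
    apply (continuous_nonvanishing_pos (fun t => W2 t - W1 t) (-1) 1 x0); auto; [| | lra].
    - intros t Ht.
      exact (is_derive_continuity_pt _ t _ (is_derive_minus W2 W1 t _ _ (HW2 t Ht) (HW1 t Ht))).
    - intros t Ht Heq.
      assert (W1 x0 = W2 x0) by (apply (solves_agree c1 c2 c3 W1 W2 t x0); auto; lra).
      lra. }
  destruct (Rlt_or_le (U x0) (V x0)) as [Hlt | Hge]; [left | right]; apply Hpreserved; auto; lra.
Qed.

Lemma is_Uplus_approaches c1 c2 c3 Up : is_Uplus c1 c2 c3 Up ->
  solves c1 c2 c3 Up /\ approaches_linearly_at_minus1 Up (tau2 c1).
Proof.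
  intros [HC1 [d [a [Hd [Ha0 Hser]]]]]. split; [now apply is_C1_sol_solves |].
  rewrite <- Ha0. exact (pseries_approaches_linearly_at_minus1 a Up d Hd Hser).
Qed.

Lemma is_Uminus_reflect c1 c2 c3 Um : is_Uminus c1 c2 c3 Um ->
  solves c2 c1 c3 (fun x => - Um (- x)) /\
  approaches_linearly_at_minus1 (fun x => - Um (- x)) (tau2 c2).
Proof.
  intros [HC1 [d [b [Hd [Hb0 Hser]]]]].
  split; [now apply solves_reflect, is_C1_sol_solves |].
  replace (tau2 c2) with (PS_opp b O)
    by (unfold PS_opp, opp; simpl; rewrite Hb0; unfold tau1', tau2; ring).
  apply (pseries_approaches_linearly_at_minus1 _ _ d Hd). intros x Hx.
  apply (is_pseries_opp b (1 + x) (Um (- x))). replace (1 + x) with (1 - - x) by ring.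
  apply Hser. lra.
Qed.

(** * Solutions near x = -1 *)

Lemma rhs_sub_riccati_bound c1 c2 c3 y u v B : -1 < y <= 0 -> 0 <= B ->
  2 - B * (1 + y) <= v -> v < u ->
  (1 + y) * (rhs c1 c2 c3 y u - rhs c1 c2 c3 y v) <= (1 + y) * B * (u - v) - / 4 * (u - v) ^ 2.
Proof.
  intros Hy HB Hv Huv.
  set (h := 1 + y) in *. assert (Hh : h = 1 + y) by reflexivity.
  apply (Rmult_le_reg_r (2 - h)); [lra |].
  replace (h * (rhs c1 c2 c3 y u - rhs c1 c2 c3 y v) * (2 - h))
    with ((1 - y ^ 2) * (rhs c1 c2 c3 y u - rhs c1 c2 c3 y v)) by (rewrite Hh; ring).
  rewrite rhs_sub by lra.
  assert (Hq : (u - v) * (- B * h + (u - v) / 2) <= (u - v) * (2 * y + (u + v) / 2))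
    by (apply Rmult_le_compat_l; lra).
  assert (0 <= h * B * (u - v) * (1 - h)) by (repeat apply Rmult_le_pos; lra).
  assert (0 <= h * (u - v) ^ 2) by (apply Rmult_le_pos; [lra | apply pow2_ge_0]).
  nra.
Qed.

Lemma solves_not_above_Uplus c1 c2 c3 Up U :
  solves c1 c2 c3 Up -> approaches_linearly_at_minus1 Up (tau2 c1) -> solves c1 c2 c3 U ->
  ~ (forall x, -1 < x < 1 -> Up x < U x).
Proof.
  intros HUp [d [B [Hd [HB Hnear]]]] HU Habove.
  set (b := -1 + Rmin d 1 / 2).
  assert (Hb : -1 < b <= -1 / 2 /\ b < -1 + d) by (unfold b; apply Rmin_case_strong; lra).
  apply (riccati_subsolution_not_positive (fun y => U y - Up y)
    (fun y => rhs c1 c2 c3 y (U y) - rhs c1 c2 c3 y (Up y)) (-1) b B (/ 4));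
    [lra | exact HB | lra | | |].
  - intros y Hy. apply (is_derive_minus U Up); [apply HU | apply HUp]; lra.
  - intros y Hy. specialize (Habove y ltac:(lra)). lra.
  - intros y Hy. replace (y - -1) with (1 + y) by ring.
    apply rhs_sub_riccati_bound; [lra | exact HB | | apply Habove; lra].
    specialize (Hnear y ltac:(lra)). apply Rabs_le_between in Hnear.
    pose proof (sqrt_pos (1 + c1)). unfold tau2 in Hnear. lra.
Qed.

Lemma rhs_eventually_neg_below_tau1 c1 c2 c3 eps : -1 <= c1 -> 0 < eps ->
  at_right (-1) (fun y => forall u, u <= tau1 c1 - eps ->
    (1 + y) * rhs c1 c2 c3 y u <= - (eps ^ 2 / 8)).
Proof.
  intros Hc Heps.
  set (A := Rabs (c2 - c1) + 2 * Rabs c3 + 2 * Rabs (tau1 c1) + 1).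
  assert (HA : 1 <= A)
    by (unfold A; pose proof (Rabs_pos (c2 - c1)); pose proof (Rabs_pos c3);
        pose proof (Rabs_pos (tau1 c1)); lra).
  set (d := Rmin 1 (Rmin (eps ^ 2 / (8 * A)) (eps / 16))).
  assert (Hd : 0 < d) by (repeat apply Rmin_pos; try apply Rdiv_lt_0_compat; nra).
  assert (Hd1 : d <= 1) by apply Rmin_l.
  assert (HdA : d <= eps ^ 2 / (8 * A)) by (eapply Rle_trans; [apply Rmin_r | apply Rmin_l]).
  assert (Hd16 : d <= eps / 16) by (eapply Rle_trans; [apply Rmin_r | apply Rmin_r]).
  apply (at_right_of_interval _ (-1) (-1 + d)); [lra |]. intros y Hy u Hu.
  set (h := 1 + y). assert (Hh : h = 1 + y) by reflexivity.
  assert (HhA : h * A <= eps ^ 2 / 8).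
  { replace (eps ^ 2 / 8) with (eps ^ 2 / (8 * A) * A) by (field; lra).
    apply Rmult_le_compat_r; lra. }
  assert (HK : c2 - c1 + c3 * (1 - y) - 2 * tau1 c1 <= A).
  { pose proof (Rle_abs (c2 - c1)). pose proof (Rle_abs c3). pose proof (Rle_abs (- c3)).
    pose proof (Rle_abs (- tau1 c1)). rewrite !Rabs_Ropp in *. unfold A. nra. }
  set (V := tau1 c1 - u).
  assert (Hroots : V ^ 2 <= (u - tau1 c1) * (u - tau2 c1)).
  { unfold V, tau1, tau2 in *. pose proof (sqrt_pos (1 + c1)). nra. }
  assert (Hnum : (1 - y ^ 2) * rhs c1 c2 c3 y u <= - (eps ^ 2 / 4)).
  { rewrite rhs_near_minus1 by lra. fold h.
    replace (h * (c2 - c1 + c3 * (1 - y) - 2 * u))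
      with (h * (c2 - c1 + c3 * (1 - y) - 2 * tau1 c1) + 2 * h * V) by (unfold V; ring).
    assert (h * (c2 - c1 + c3 * (1 - y) - 2 * tau1 c1) <= h * A) by (apply Rmult_le_compat_l; lra).
    assert (2 * h * V <= V ^ 2 / 8) by (unfold V in *; nra).
    assert (eps ^ 2 <= V ^ 2) by (unfold V in *; nra).
    lra. }
  replace (1 - y ^ 2) with (h * (2 - h)) in Hnum by (rewrite Hh; ring).
  nra.
Qed.

Lemma rhs_eventually_pos_between_roots c1 c2 c3 eps : -1 <= c1 -> 0 < eps -> 0 < sqrt (1 + c1) ->
  at_right (-1) (fun y => forall u, tau1 c1 + eps <= u <= tau2 c1 - sqrt (1 + c1) / 2 ->
    eps * sqrt (1 + c1) / 16 <= (1 + y) * rhs c1 c2 c3 y u).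
Proof.
  intros Hc Heps Hs. set (s := sqrt (1 + c1)) in *.
  assert (Ht1 : tau1 c1 = 2 - 2 * s) by reflexivity.
  assert (Ht2 : tau2 c1 = 2 + 2 * s) by reflexivity.
  set (W := Rabs (c2 - c1) + 2 * Rabs c3 + 4 + 4 * s).
  assert (HW : 4 <= W)
    by (unfold W; pose proof (Rabs_pos (c2 - c1)); pose proof (Rabs_pos c3); lra).
  set (d := Rmin 1 (eps * s / (8 * W))).
  assert (Hd : 0 < d) by (apply Rmin_pos; [lra | apply Rdiv_lt_0_compat; nra]).
  assert (Hd1 : d <= 1) by apply Rmin_l.
  assert (HdW : d <= eps * s / (8 * W)) by apply Rmin_r.
  apply (at_right_of_interval _ (-1) (-1 + d)); [lra |]. intros y Hy u Hu.
  set (h := 1 + y). assert (Hh : h = 1 + y) by reflexivity.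
  assert (HhW : h * W <= eps * s / 8).
  { replace (eps * s / 8) with (eps * s / (8 * W) * W) by (field; lra).
    apply Rmult_le_compat_r; lra. }
  assert (HK : Rabs (c2 - c1 + c3 * (1 - y) - 2 * u) <= W).
  { pose proof (Rle_abs (c2 - c1)). pose proof (Rle_abs (- (c2 - c1))).
    pose proof (Rle_abs c3). pose proof (Rle_abs (- c3)). rewrite !Rabs_Ropp in *.
    apply Rabs_le. unfold W. nra. }
  assert (Hroots : eps * (s / 2) <= (u - tau1 c1) * (tau2 c1 - u))
    by (apply Rmult_le_compat; lra).
  assert (Hnum : eps * s / 8 <= (1 - y ^ 2) * rhs c1 c2 c3 y u).
  { rewrite rhs_near_minus1 by lra. fold h. apply Rabs_le_between in HK.
    assert (- (eps * s / 8) <= h * (c2 - c1 + c3 * (1 - y) - 2 * u)) by nra.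
    lra. }
  replace (1 - y ^ 2) with (h * (2 - h)) in Hnum by (rewrite Hh; ring).
  assert (0 < eps * s) by nra.
  set (r := h * rhs c1 c2 c3 y u) in *.
  assert (Hr : r * (2 - h) = h * (2 - h) * rhs c1 c2 c3 y u) by (unfold r; ring).
  nra.
Qed.

Lemma solves_below_Uplus_gap c1 c2 c3 Up U x0 : -1 < x0 < 1 -> 0 < sqrt (1 + c1) ->
  solves c1 c2 c3 Up -> solves c1 c2 c3 U -> (forall y, -1 < y <= x0 -> U y < Up y) ->
  (forall y, -1 < y <= x0 -> tau2 c1 - sqrt (1 + c1) / 2 <= Up y) ->
  exists x1, -1 < x1 <= x0 /\ sqrt (1 + c1) < Up x1 - U x1.
Proof.
  intros Hx0 Hs HUp HU Hlt Hnear. set (s := sqrt (1 + c1)) in *.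
  destruct (classic (exists x1, -1 < x1 <= x0 /\ s < Up x1 - U x1)) as [Hgap | Hnone];
    [exact Hgap | exfalso].
  assert (Hclose : forall y, -1 < y <= x0 -> Up y - U y <= s).
  { intros y Hy. apply Rnot_lt_le. intros Hgt. apply Hnone. now exists y. }
  destruct (log_derive_le_pole_unbounded_above (fun y => Up y - U y)
    (fun y => rhs c1 c2 c3 y (Up y) - rhs c1 c2 c3 y (U y)) (-1) x0 (s / 2)) with (M := s)
    as [y [Hy Hgt]]; [lra | lra | | | |].
  - intros y Hy. apply (is_derive_minus Up U); [apply HUp | apply HU]; lra.
  - intros y Hy. specialize (Hlt y Hy). lra.
  - intros y Hy. specialize (Hlt y Hy). specialize (Hclose y Hy). specialize (Hnear y Hy).
    assert (Hsum : s <= 2 * y + (Up y + U y) / 2) by (unfold tau2 in Hnear; fold s in Hnear; lra).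
    apply (Rmult_le_reg_r (2 - (y - -1))); [lra |].
    replace ((y - -1) * (rhs c1 c2 c3 y (Up y) - rhs c1 c2 c3 y (U y)) * (2 - (y - -1)))
      with ((1 - y ^ 2) * (rhs c1 c2 c3 y (Up y) - rhs c1 c2 c3 y (U y))) by ring.
    rewrite rhs_sub by lra.
    assert ((Up y - U y) * s <= (Up y - U y) * (2 * y + (Up y + U y) / 2))
      by (apply Rmult_le_compat_l; lra).
    assert (0 <= (y + 1) * s * (Up y - U y)) by (repeat apply Rmult_le_pos; lra).
    lra.
  - specialize (Hclose y ltac:(lra)). lra.
Qed.

Lemma solves_eventually_gt_tau1 c1 c2 c3 U eps : -1 <= c1 -> solves c1 c2 c3 U -> 0 < eps ->
  at_right (-1) (fun y => tau1 c1 - eps < U y).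
Proof.
  intros Hc HU Heps.
  destruct (at_right_interval _ (-1) 1 ltac:(lra)
    (rhs_eventually_neg_below_tau1 c1 c2 c3 eps Hc Heps))
    as [b [Hb Hzone]].
  apply (eventually_gt_of_derive_le_pole U (fun y => rhs c1 c2 c3 y (U y)) (-1) b (eps ^ 2 / 8));
    [lra | nra | |].
  - intros y Hy. apply HU. lra.
  - intros y Hy Hu. replace (y - -1) with (1 + y) by ring. exact (Hzone y Hy (U y) Hu).
Qed.

Lemma solves_below_Uplus_eventually_lt_tau1 c1 c2 c3 Up U eps : -1 <= c1 -> 0 < sqrt (1 + c1) ->
  solves c1 c2 c3 Up -> approaches_linearly_at_minus1 Up (tau2 c1) -> solves c1 c2 c3 U ->
  (forall x, -1 < x < 1 -> U x < Up x) -> 0 < eps -> eps <= sqrt (1 + c1) ->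
  at_right (-1) (fun y => U y < tau1 c1 + eps).
Proof.
  intros Hc Hs HUp HUpl HU Hlt Heps Hes.
  set (s := sqrt (1 + c1)) in *.
  assert (Htau : tau2 c1 = tau1 c1 + 4 * s) by (unfold tau1, tau2, s; ring).
  destruct (at_right_interval _ (-1) 1 ltac:(lra)
    (filter_and (F := at_right (-1)) _ _
      (approaches_linearly_at_minus1_eventually Up (tau2 c1) HUpl (s / 2) ltac:(lra))
      (rhs_eventually_pos_between_roots c1 c2 c3 eps Hc Heps Hs)))
    as [x0 [Hx0 Hnear]].
  fold s in Hnear.
  destruct (solves_below_Uplus_gap c1 c2 c3 Up U x0) as [x1 [Hx1 Hgap]];
    [lra | exact Hs | exact HUp | exact HU | intros y Hy; apply Hlt; lra | |].
  { intros y Hy. fold s. destruct (Hnear y Hy) as [HUpy _]. apply Rabs_def2 in HUpy. lra. }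
  fold s in Hgap.
  assert (Hcap : forall y, -1 < y <= x1 -> U y < tau2 c1 - s / 2).
  { apply (barrier_below U (fun y => rhs c1 c2 c3 y (U y)) (-1) x1); [lra | | |].
    - intros y Hy. apply HU. lra.
    - destruct (Hnear x1 ltac:(lra)) as [HUpx1 _]. apply Rabs_def2 in HUpx1. lra.
    - intros y Hy Heq. destruct (Hnear y ltac:(lra)) as [_ Hzone].
      assert (Hpos : eps * s / 16 <= (1 + y) * rhs c1 c2 c3 y (U y)) by (apply Hzone; lra).
      nra. }
  apply (eventually_lt_of_derive_ge_pole U (fun y => rhs c1 c2 c3 y (U y)) (-1) x1 (eps * s / 16));
    [lra | nra | |].
  - intros y Hy. apply HU. lra.
  - intros y Hy Hge. replace (y - -1) with (1 + y) by ring.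
    destruct (Hnear y ltac:(lra)) as [_ Hzone].
    apply Hzone. split; [exact Hge | left; apply Hcap, Hy].
Qed.

Lemma solves_below_Uplus_tends_to_tau1 c1 c2 c3 Up U : -1 <= c1 ->
  solves c1 c2 c3 Up -> approaches_linearly_at_minus1 Up (tau2 c1) -> solves c1 c2 c3 U ->
  (exists x, -1 < x < 1 /\ U x <> Up x) ->
  (forall x, -1 < x < 1 -> U x < Up x) /\ filterlim U (at_right (-1)) (locally (tau1 c1)).
Proof.
  intros Hc HUp HUpl HU [x0 [Hx0 Hne]].
  assert (Hlt : forall x, -1 < x < 1 -> U x < Up x).
  { destruct (solves_strictly_ordered c1 c2 c3 U Up x0 HU HUp Hx0 Hne) as [H | H]; [exact H |].
    exfalso. exact (solves_not_above_Uplus c1 c2 c3 Up U HUp HUpl HU H). }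
  split; [exact Hlt |].
  apply filterlim_at_right_abs. intros eps Heps.
  assert (Hupper : at_right (-1) (fun y => U y < tau1 c1 + eps)).
  { destruct (Rle_lt_or_eq_dec 0 (sqrt (1 + c1)) (sqrt_pos _)) as [Hs | Hs].
    - apply filter_imp with (fun y => U y < tau1 c1 + Rmin eps (sqrt (1 + c1))).
      + intros y Hy. pose proof (Rmin_l eps (sqrt (1 + c1))). lra.
      + apply (solves_below_Uplus_eventually_lt_tau1 c1 c2 c3 Up); auto;
          [apply Rmin_pos; lra | apply Rmin_r].
    - assert (Htau : tau2 c1 = tau1 c1) by (unfold tau1, tau2; rewrite <- Hs; ring).
      apply filter_imp with (fun y => -1 < y < 1 /\ Rabs (Up y - tau2 c1) < eps).
      + intros y [Hy HUpy]. specialize (Hlt y Hy). apply Rabs_def2 in HUpy. lra.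
      + apply filter_and; [| exact (approaches_linearly_at_minus1_eventually Up _ HUpl eps Heps)].
        apply (at_right_of_interval _ (-1) 0); [lra |]. intros y Hy. lra. }
  apply filter_imp with (fun y => tau1 c1 - eps < U y /\ U y < tau1 c1 + eps).
  - intros y [Hlo Hhi]. apply Rabs_def1; lra.
  - apply filter_and; [exact (solves_eventually_gt_tau1 c1 c2 c3 U eps Hc HU Heps) | exact Hupper].
Qed.

(* The hypothesis [c3bar c1 c2 < c3] is what makes U^+ and U^- exist on all of (-1,1). *)
Theorem lemma2p8 (c1 c2 c3 : R) (Up Um U : R -> R) :
  -1 <= c1 -> -1 <= c2 -> c3bar c1 c2 < c3 ->
  is_Uplus c1 c2 c3 Up -> is_Uminus c1 c2 c3 Um ->
  is_C1_sol c1 c2 c3 U ->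
  (exists x, -1 < x < 1 /\ U x <> Up x) ->
  (exists x, -1 < x < 1 /\ U x <> Um x) ->
  (forall x, -1 < x < 1 -> Um x < U x < Up x) /\
  filterlim U (at_right (-1)) (locally (tau1 c1)) /\
  filterlim U (at_left 1) (locally (tau2' c2)).
Proof.
  intros Hc1 Hc2 _ HUplus HUminus HC1 [xp Hxp] [xm [Hxm Hnem]].
  pose proof (is_C1_sol_solves c1 c2 c3 U HC1) as HU.
  destruct (is_Uplus_approaches c1 c2 c3 Up HUplus) as [HUp HUpl].
  destruct (is_Uminus_reflect c1 c2 c3 Um HUminus) as [HUm HUml].
  destruct (solves_below_Uplus_tends_to_tau1 c1 c2 c3 Up U Hc1 HUp HUpl HU)
    as [Hbelow Hleft]; [now exists xp |].
  destruct (solves_below_Uplus_tends_to_tau1 c2 c1 c3 _ (fun x => - U (- x)) Hc2 HUm HUml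
    (solves_reflect c1 c2 c3 U HU)) as [Habove Hright].
  { exists (- xm). split; [lra |]. rewrite Ropp_involutive. lra. }
  split; [| split; [exact Hleft |]].
  - intros x Hx. split; [| now apply Hbelow].
    specialize (Habove (- x) ltac:(lra)). rewrite Ropp_involutive in Habove. lra.
  - replace (tau2' c2) with (- tau1 c2) by (unfold tau1, tau2'; ring).
    apply (filterlim_ext (fun x => - (- U (- - x)))); [intros x; now rewrite !Ropp_involutive |].
    exact (filterlim_reflect _ _ Hright).
Qed.
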